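(* Let $\ell:K(H\times\mathrm{Id})\to H\widehat K$ be an abstract GSOS rule with $\ell$-interpretation $b:KC\to C$, let $V$ be an endofunctor, $F=K+V$, and let $e:V(H\times\mathrm{Id})\to H\widehat F$ be an $\ell$-rps. Then there is a unique $V$-algebra $s:VC\to C$ (the interpreted solution of $e$) such that $$s=c^{-1}\cdot H[b,s]^\sharp\cdot e_C\cdot V\langle c,\mathrm{id}_C\rangle.$$ Moreover, $c^{-1}\cdot H[b,s]^\sharp:H\widehat FC\to C$ is a completely iterative algebra for $H\widehat F$.
   Context: Let $\mathcal A$ be a category with binary products and coproducts, let $H:\mathcal A\to\mathcal A$ be a functor with a terminal coalgebra $c:C\to HC$ (an isomorphism by Lambek's lemma). For an endofunctor $G$ we assume every object $X$ has a free $G$-algebra $\varphi_X:G\widehat GX\to\widehat GX$ with universal morphism $\eta_X$, so $\widehat G$ is the free monad on $G$ with universal natural transformation $\kappa:G\to\widehat G$; for a $G$-algebra $a:GA\to A$, $a^\sharp:\widehat GA\to A$ is the unique $G$-algebra homomorphism with $a^\sharp\cdot\eta_A=\mathrm{id}_A$. An abstract GSOS rule for $K$ is a natural transformation $\ell:K(H\times\mathrm{Id})\to H\widehat K$; its interpretation is the unique $b:KC\to C$ with $c\cdot b=Hb^\sharp\cdot\ell_C\cdot K\langle c,\mathrm{id}_C\rangle$. An $\ell$-rps is a natural transformation $e:V(H\times\mathrm{Id})\to H\widehat F$ with $F=K+V$. A $G$-algebra $a:GA\to A$ is a completely iterative algebra if every $e:X\to GX+A$ has a unique $e^\dagger:X\to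 A$ with $e^\dagger=[a,\mathrm{id}_A]\cdot(Ge^\dagger+\mathrm{id}_A)\cdot e$. *)

Record Category := {
  Ob :> Type;
  Hom : Ob -> Ob -> Type;
  comp : forall {A B D : Ob}, Hom B D -> Hom A B -> Hom A D;
  idm : forall A : Ob, Hom A A;
  comp_assoc : forall A B D E (h : Hom D E) (g : Hom B D) (f : Hom A B),
      comp h (comp g f) = comp (comp h g) f;
  comp_id_l : forall A B (f : Hom A B), comp (idm B) f = f;
  comp_id_r : forall A B (f : Hom A B), comp f (idm A) = f }.
Arguments Hom {c} _ _.
Arguments comp {c A B D} _ _.
Arguments idm {c} A.
Notation "g \o f" := (comp g f) (at level 40, left associativity).

Section Cat.
Context (Cat : Category).

Record BinProducts := {
  prodO : Cat -> Cat -> Cat;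
  pi1 : forall A B, Hom (prodO A B) A;
  pi2 : forall A B, Hom (prodO A B) B;
  pair : forall X A B, Hom X A -> Hom X B -> Hom X (prodO A B);
  pair_pi1 : forall X A B (f : Hom X A) (g : Hom X B), pi1 A B \o pair X A B f g = f;
  pair_pi2 : forall X A B (f : Hom X A) (g : Hom X B), pi2 A B \o pair X A B f g = g;
  pair_uniq : forall X A B (f : Hom X A) (g : Hom X B) (h : Hom X (prodO A B)),
      pi1 A B \o h = f -> pi2 A B \o h = g -> h = pair X A B f g }.
Arguments pair _ {X A B} _ _.

Record BinCoproducts := {
  coprodO : Cat -> Cat -> Cat;
  inl : forall A B, Hom A (coprodO A B);
  inr : forall A B, Hom B (coprodO A B);
  copair : forall A B X, Hom A X -> Hom B X -> Hom (coprodO A B) X;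
  copair_inl : forall A B X (f : Hom A X) (g : Hom B X), copair A B X f g \o inl A B = f;
  copair_inr : forall A B X (f : Hom A X) (g : Hom B X), copair A B X f g \o inr A B = g;
  copair_uniq : forall A B X (f : Hom A X) (g : Hom B X) (h : Hom (coprodO A B) X),
      h \o inl A B = f -> h \o inr A B = g -> h = copair A B X f g }.
Arguments copair _ {A B X} _ _.

Record Functor := {
  fob : Cat -> Cat;
  fmap : forall A B, Hom A B -> Hom (fob A) (fob B);
  fmap_id : forall A, fmap A A (idm A) = idm (fob A);
  fmap_comp : forall A B D (g : Hom B D) (f : Hom A B),
      fmap A D (g \o f) = fmap B D g \o fmap A B f }.
Arguments fmap _ {A B} _.

(** Free G-algebras on every object, for an endofunctor G given by its object
    and morphism actions G0, G1: phi X : G (Ghat X) -> Ghat X with universal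
    morphism eta X : X -> Ghat X; [ext a f] is the unique G-algebra
    homomorphism from (Ghat X, phi X) to (A, a) extending f. *)
Record FreeAlgs (G0 : Cat -> Cat) (G1 : forall A B, Hom A B -> Hom (G0 A) (G0 B)) := {
  hob : Cat -> Cat;
  phi : forall X, Hom (G0 (hob X)) (hob X);
  eta : forall X, Hom X (hob X);
  ext : forall A (a : Hom (G0 A) A) X (f : Hom X A), Hom (hob X) A;
  ext_eta : forall A (a : Hom (G0 A) A) X (f : Hom X A), ext A a X f \o eta X = f;
  ext_hom : forall A (a : Hom (G0 A) A) X (f : Hom X A),
      ext A a X f \o phi X = a \o G1 _ _ (ext A a X f);
  ext_uniq : forall A (a : Hom (G0 A) A) X (f : Hom X A) (h : Hom (hob X) A),
      h \o eta X = f -> h \o phi X = a \o G1 _ _ h -> h = ext A a X f }.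
Arguments hob {G0 G1} _ _.
Arguments phi {G0 G1} _ _.
Arguments eta {G0 G1} _ _.
Arguments ext {G0 G1} _ {A} _ {X} _.

Context (P : BinProducts) (Q : BinCoproducts).

Definition hxid (H : Functor) {X Y : Cat} (f : Hom X Y) :
  Hom (prodO P (fob H X) X) (prodO P (fob H Y) Y) :=
  pair P (fmap H f \o pi1 P _ _) (f \o pi2 P _ _).

Definition coprodmap {A B A' B' : Cat} (f : Hom A A') (g : Hom B B') :
  Hom (coprodO Q A B) (coprodO Q A' B') :=
  copair Q (inl Q _ _ \o f) (inr Q _ _ \o g).

Definition sumF0 (K V : Functor) (X : Cat) : Cat := coprodO Q (fob K X) (fob V X).
Definition sumF1 (K V : Functor) (A B : Cat) (f : Hom A B) :
  Hom (sumF0 K V A) (sumF0 K V B) := coprodmap (fmap K f) (fmap V f).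

Definition hat {G0 G1} (FA : FreeAlgs G0 G1) {X Y : Cat} (f : Hom X Y) :
  Hom (hob FA X) (hob FA Y) := ext FA (phi FA Y) (eta FA Y \o f).
Definition sharp {G0 G1} (FA : FreeAlgs G0 G1) {A : Cat} (a : Hom (G0 A) A) :
  Hom (hob FA A) A := ext FA a (idm A).

Definition is_terminal_coalg (H : Functor) (C : Cat) (c : Hom C (fob H C)) : Prop :=
  forall A (a : Hom A (fob H A)), exists! h : Hom A C, c \o h = fmap H h \o a.

Definition is_GSOS_rule (H K : Functor) (FK : FreeAlgs (fob K) (@fmap K))
  (l : forall X : Cat, Hom (fob K (prodO P (fob H X) X)) (fob H (hob FK X))) : Prop :=
  forall X Y (f : Hom X Y), l Y \o fmap K (hxid H f) = fmap H (hat FK f) \o l X.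

Definition is_rps (H K V : Functor) (FF : FreeAlgs (sumF0 K V) (sumF1 K V))
  (e : forall X : Cat, Hom (fob V (prodO P (fob H X) X)) (fob H (hob FF X))) : Prop :=
  forall X Y (f : Hom X Y), e Y \o fmap V (hxid H f) = fmap H (hat FF f) \o e X.

Definition is_cia (G0 : Cat -> Cat) (G1 : forall A B, Hom A B -> Hom (G0 A) (G0 B))
  (A : Cat) (a : Hom (G0 A) A) : Prop :=
  forall X (e : Hom X (coprodO Q (G0 X) A)),
    exists! d : Hom X A, d = copair Q a (idm A) \o coprodmap (G1 _ _ d) (idm A) \o e.

Definition HFhat0 (H : Functor) {G0 G1} (FA : FreeAlgs G0 G1) (X : Cat) : Cat :=
  fob H (hob FA X).
Definition HFhat1 (H : Functor) {G0 G1} (FA : FreeAlgs G0 G1) (A B : Cat) (f : Hom A B) :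
  Hom (HFhat0 H FA A) (HFhat0 H FA B) := fmap H (hat FA f).

End Cat.
Arguments FreeAlgs {Cat} G0 G1.
Arguments pair {Cat} _ {X A B} _ _.
Arguments copair {Cat} _ {A B X} _ _.
Arguments fmap {Cat} _ {A B} _.
Arguments hob {Cat G0 G1} _ _.
Arguments phi {Cat G0 G1} _ _.
Arguments eta {Cat G0 G1} _ _.
Arguments ext {Cat G0 G1} _ {A} _ {X} _.
Arguments fob {Cat} _ _.
Arguments prodO {Cat} _ _ _.
Arguments pi1 {Cat} _ _ _.
Arguments pi2 {Cat} _ _ _.
Arguments coprodO {Cat} _ _ _.
Arguments inl {Cat} _ _ _.
Arguments inr {Cat} _ _ _.
Arguments hxid {Cat} _ _ {X Y} _.
Arguments coprodmap {Cat} _ {A B A' B'} _ _.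
Arguments sumF0 {Cat} _ _ _ _.
Arguments sumF1 {Cat} _ _ _ _ _ _.
Arguments hat {Cat G0 G1} _ {X Y} _.
Arguments sharp {Cat G0 G1} _ {A} _.
Arguments is_terminal_coalg {Cat} _ _ _.
Arguments is_GSOS_rule {Cat} _ _ _ _ _.
Arguments is_rps {Cat} _ _ _ _ _ _ _.
Arguments is_cia {Cat} _ _ _ _ _.
Arguments HFhat0 {Cat} _ {G0 G1} _ _.
Arguments HFhat1 {Cat} _ {G0 G1} _ _ _ _.

From Stdlib Require Import Setoid.

(* Put [F = K + V] and [rho = [H j . l, e] : F (H x Id) -> H F^], where [j : K^ -> F^] is
   induced by the coproduct injection; [rho] is again an abstract GSOS rule.  An
   interpretation [a = [u, s]] of [rho] has an interpretation [u] of [l] as first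
   component, so [u = b], and [s] solves the equation of the theorem; conversely every
   solution [s] makes [[b, s]] an interpretation of [rho].  It therefore suffices to
   show, for an arbitrary abstract GSOS rule [r], that it has a unique interpretation
   [a] and that [c^-1 . H a^#] is completely iterative.

   Both facts rest on the lifting of a coalgebra [g : W -> H G^ W] to a coalgebra
   [lift g] on the free algebra [G^ W], which makes [(G^ W, phi, lift g)] an
   [r]-bialgebra: an algebra morphism from [G^ W] into any bialgebra is a coalgebra
   morphism as soon as it is one on generators.  The coalgebra morphism [h] from the
   lifting of [H eta . c] into [C] is an Eilenberg-Moore algebra, whence [h = a^#] for
   an interpretation [a]; a flat equation [X -> H G^ X + C] is a coalgebra on [X + C],
   and it is solved by the coalgebra morphism out of its lifting. *)

Section Iso.
Context {Cat : Category}.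

Lemma iso_eq_comp {A B D : Cat} (f : Hom A B) (finv : Hom B A)
  (Hf1 : finv \o f = idm A) (Hf2 : f \o finv = idm B) (s : Hom D A) (t : Hom D B) :
  s = finv \o t <-> f \o s = t.
Proof.
  split; intros E; subst.
  - rewrite comp_assoc, Hf2, comp_id_l. reflexivity.
  - rewrite comp_assoc, Hf1, comp_id_l. reflexivity.
Qed.

End Iso.

Section Products.
Context {Cat : Category} (P : BinProducts Cat).

Lemma pair_comp {X Y A B : Cat} (f : Hom X A) (g : Hom X B) (k : Hom Y X) :
  pair P f g \o k = pair P (f \o k) (g \o k).
Proof.
  apply pair_uniq; rewrite comp_assoc; [rewrite pair_pi1 | rewrite pair_pi2]; reflexivity.
Qed.

Lemma hxid_pair (F : Functor Cat) {X Y Z : Cat} (f : Hom X Y)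
  (u : Hom Z (fob F X)) (v : Hom Z X) :
  hxid P F f \o pair P u v = pair P (fmap F f \o u) (f \o v).
Proof. unfold hxid. rewrite pair_comp, <- !comp_assoc, pair_pi1, pair_pi2. reflexivity. Qed.

End Products.

Section Coproducts.
Context {Cat : Category} (Q : BinCoproducts Cat).

Lemma copair_eta {A B X : Cat} (h : Hom (coprodO Q A B) X) :
  h = copair Q (h \o inl Q A B) (h \o inr Q A B).
Proof. apply copair_uniq; reflexivity. Qed.

Lemma copair_inj {A B X : Cat} (f f' : Hom A X) (g g' : Hom B X) :
  copair Q f g = copair Q f' g' -> f = f' /\ g = g'.
Proof.
  intros E. split.
  - rewrite <- (copair_inl _ Q _ _ _ f g), E. apply copair_inl.
  - rewrite <- (copair_inr _ Q _ _ _ f g), E. apply copair_inr.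
Qed.

Lemma comp_copair {A B X Y : Cat} (f : Hom A X) (g : Hom B X) (k : Hom X Y) :
  k \o copair Q f g = copair Q (k \o f) (k \o g).
Proof.
  apply copair_uniq; rewrite <- comp_assoc; [rewrite copair_inl | rewrite copair_inr];
    reflexivity.
Qed.

Lemma copair_coprodmap {A B A' B' X : Cat} (f : Hom A A') (g : Hom B B')
  (u : Hom A' X) (v : Hom B' X) :
  copair Q u v \o coprodmap Q f g = copair Q (u \o f) (v \o g).
Proof.
  unfold coprodmap. rewrite comp_copair, !comp_assoc, copair_inl, copair_inr. reflexivity.
Qed.

End Coproducts.

Section FreeAlgebra.
Context {Cat : Category} (G : Functor Cat) (FA : FreeAlgs (fob G) (@fmap Cat G)).

Local Notation T := (hob FA).
Local Notation mu X := (sharp FA (phi FA X)).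

Lemma alg_hom_ext {A X : Cat} (a : Hom (fob G A) A) (h1 h2 : Hom (T X) A) :
  h1 \o eta FA X = h2 \o eta FA X ->
  h1 \o phi FA X = a \o fmap G h1 -> h2 \o phi FA X = a \o fmap G h2 -> h1 = h2.
Proof.
  intros E H1 H2.
  transitivity (ext FA a (h2 \o eta FA X)); [|symmetry]; apply ext_uniq; auto.
Qed.

Lemma alg_hom_comp {A B D : Cat} (a : Hom (fob G A) A) (b : Hom (fob G B) B)
  (d : Hom (fob G D) D) (k : Hom A B) (m : Hom B D) :
  k \o a = b \o fmap G k -> m \o b = d \o fmap G m -> (m \o k) \o a = d \o fmap G (m \o k).
Proof.
  intros E1 E2.
  rewrite <- comp_assoc, E1, comp_assoc, E2, <- comp_assoc, <- fmap_comp. reflexivity.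
Qed.

Lemma hat_eta {X Y : Cat} (f : Hom X Y) : hat FA f \o eta FA X = eta FA Y \o f.
Proof. apply ext_eta. Qed.

Lemma hat_phi {X Y : Cat} (f : Hom X Y) :
  hat FA f \o phi FA X = phi FA Y \o fmap G (hat FA f).
Proof. apply ext_hom. Qed.

Lemma hat_comp {X Y Z : Cat} (g : Hom Y Z) (f : Hom X Y) :
  hat FA (g \o f) = hat FA g \o hat FA f.
Proof.
  apply (alg_hom_ext (phi FA Z)).
  - rewrite (hat_eta (g \o f)), <- comp_assoc, (hat_eta f),
      (comp_assoc _ _ _ _ _ (hat FA g)), (hat_eta g), comp_assoc.
    reflexivity.
  - apply hat_phi.
  - apply alg_hom_comp with (b := phi FA Y); apply hat_phi.
Qed.

Lemma sharp_eta {A : Cat} (a : Hom (fob G A) A) : sharp FA a \o eta FA A = idm A.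
Proof. apply ext_eta. Qed.

Lemma sharp_phi {A : Cat} (a : Hom (fob G A) A) :
  sharp FA a \o phi FA A = a \o fmap G (sharp FA a).
Proof. apply ext_hom. Qed.

Lemma sharp_hat_eta {A X : Cat} (a : Hom (fob G A) A) (f : Hom X A) :
  sharp FA a \o hat FA f \o eta FA X = f.
Proof. rewrite <- comp_assoc, hat_eta, comp_assoc, sharp_eta, comp_id_l. reflexivity. Qed.

Lemma sharp_hat_alg_hom {A X : Cat} (a : Hom (fob G A) A) (f : Hom X A) :
  (sharp FA a \o hat FA f) \o phi FA X = a \o fmap G (sharp FA a \o hat FA f).
Proof. apply alg_hom_comp with (b := phi FA A); [apply hat_phi | apply sharp_phi]. Qed.

Lemma ext_sharp {A X : Cat} (a : Hom (fob G A) A) (f : Hom X A) :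
  ext FA a f = sharp FA a \o hat FA f.
Proof. symmetry. apply ext_uniq; [apply sharp_hat_eta | apply sharp_hat_alg_hom]. Qed.

Lemma alg_hom_sharp {A B : Cat} (a : Hom (fob G A) A) (b : Hom (fob G B) B) (k : Hom A B) :
  k \o a = b \o fmap G k -> k \o sharp FA a = sharp FA b \o hat FA k.
Proof.
  intros E. apply (alg_hom_ext b).
  - rewrite sharp_hat_eta, <- comp_assoc, sharp_eta, comp_id_r. reflexivity.
  - apply alg_hom_comp with (b := a); [apply sharp_phi | exact E].
  - apply sharp_hat_alg_hom.
Qed.

Lemma sharp_phi_eta {A : Cat} (a : Hom (fob G A) A) :
  sharp FA a \o phi FA A \o fmap G (eta FA A) = a.
Proof.
  rewrite sharp_phi, <- comp_assoc, <- fmap_comp, sharp_eta, fmap_id, comp_id_r. reflexivity.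
Qed.

Lemma mu_hat_eta (X : Cat) : mu X \o hat FA (eta FA X) = idm (T X).
Proof.
  apply (alg_hom_ext (phi FA X)).
  - rewrite sharp_hat_eta, comp_id_l. reflexivity.
  - apply sharp_hat_alg_hom.
  - rewrite fmap_id, comp_id_l, comp_id_r. reflexivity.
Qed.

Lemma em_alg_sharp {A : Cat} (h : Hom (T A) A) :
  h \o eta FA A = idm A -> h \o mu A = h \o hat FA h ->
  h = sharp FA (h \o phi FA A \o fmap G (eta FA A)).
Proof.
  intros Hunit Hmult. apply ext_uniq; [exact Hunit|].
  rewrite <- (comp_assoc _ _ _ _ _ (h \o phi FA A)), <- fmap_comp, <- hat_eta,
    fmap_comp, comp_assoc, <- (comp_assoc _ _ _ _ _ h), <- hat_phi, comp_assoc, <- Hmult,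
    <- (comp_assoc _ _ _ _ _ h), sharp_phi, <- !comp_assoc, <- fmap_comp, sharp_eta,
    fmap_id, comp_id_r.
  reflexivity.
Qed.

End FreeAlgebra.

Section Lifting.
Context {Cat : Category} (P : BinProducts Cat) (H G : Functor Cat)
  (FA : FreeAlgs (fob G) (@fmap Cat G))
  (r : forall X : Cat, Hom (fob G (prodO P (fob H X) X)) (fob H (hob FA X)))
  (Hr : is_GSOS_rule P H G FA r).

Local Notation T := (hob FA).
Local Notation mu X := (sharp FA (phi FA X)).

Definition is_bialg {A : Cat} (a : Hom (fob G A) A) (p : Hom A (fob H A)) : Prop :=
  p \o a = fmap H (sharp FA a) \o r A \o fmap G (pair P p (idm A)).

Definition bialg_alg {A : Cat} (a : Hom (fob G A) A) :
  Hom (fob G (prodO P (fob H A) A)) (prodO P (fob H A) A) :=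
  pair P (fmap H (sharp FA a) \o r A) (a \o fmap G (pi2 P _ _)).

Lemma is_bialg_pair_hom {A : Cat} (a : Hom (fob G A) A) (p : Hom A (fob H A)) :
  is_bialg a p -> pair P p (idm A) \o a = bialg_alg a \o fmap G (pair P p (idm A)).
Proof.
  intros Hp. unfold bialg_alg. rewrite !pair_comp, comp_id_l. f_equal; [exact Hp|].
  rewrite <- comp_assoc, <- fmap_comp, pair_pi2, fmap_id, comp_id_r. reflexivity.
Qed.

Lemma hxid_bialg_alg_hom {A B : Cat} (a : Hom (fob G A) A) (b : Hom (fob G B) B)
  (k : Hom A B) :
  k \o a = b \o fmap G k -> hxid P H k \o bialg_alg a = bialg_alg b \o fmap G (hxid P H k).
Proof.
  intros Hk. unfold bialg_alg. rewrite hxid_pair, pair_comp. f_equal.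
  - rewrite <- comp_assoc, Hr, !comp_assoc, <- !fmap_comp, (alg_hom_sharp G FA a b k Hk).
    reflexivity.
  - rewrite <- comp_assoc, <- fmap_comp. unfold hxid.
    rewrite pair_pi2, fmap_comp, !comp_assoc, Hk. reflexivity.
Qed.

Definition lifting {W : Cat} (g : Hom W (fob H (T W))) :
  Hom (T W) (prodO P (fob H (T W)) (T W)) :=
  ext FA (bialg_alg (phi FA W)) (pair P g (eta FA W)).

Definition lift {W : Cat} (g : Hom W (fob H (T W))) : Hom (T W) (fob H (T W)) :=
  pi1 P _ _ \o lifting g.

Lemma lifting_pair {W : Cat} (g : Hom W (fob H (T W))) :
  lifting g = pair P (lift g) (idm (T W)).
Proof.
  apply pair_uniq; [reflexivity|].
  apply (alg_hom_ext G FA (phi FA W)).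
  - unfold lifting. rewrite <- comp_assoc, ext_eta, pair_pi2, comp_id_l. reflexivity.
  - unfold lifting. rewrite <- comp_assoc, ext_hom, comp_assoc. unfold bialg_alg.
    rewrite pair_pi2, <- comp_assoc, <- fmap_comp. reflexivity.
  - rewrite fmap_id, comp_id_l, comp_id_r. reflexivity.
Qed.

Lemma lift_eta {W : Cat} (g : Hom W (fob H (T W))) : lift g \o eta FA W = g.
Proof. unfold lift, lifting. rewrite <- comp_assoc, ext_eta, pair_pi1. reflexivity. Qed.

Lemma lift_bialg {W : Cat} (g : Hom W (fob H (T W))) : is_bialg (phi FA W) (lift g).
Proof.
  unfold is_bialg. rewrite <- lifting_pair. unfold lift at 1, lifting.
  rewrite <- comp_assoc, ext_hom, comp_assoc. unfold bialg_alg. rewrite pair_pi1.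
  reflexivity.
Qed.

(* Both [<p, id> . k] and [(H k x k) . lifting g] are algebra morphisms out of the free
   algebra, into [bialg_alg a], and they agree on generators. *)
Lemma bialg_coalg_hom {W A : Cat} (a : Hom (fob G A) A) (p : Hom A (fob H A))
  (g : Hom W (fob H (T W))) (k : Hom (T W) A) :
  is_bialg a p -> k \o phi FA W = a \o fmap G k -> p \o k \o eta FA W = fmap H k \o g ->
  p \o k = fmap H k \o lift g.
Proof.
  intros Hp Hk Hgen.
  assert (E : pair P p (idm A) \o k = hxid P H k \o lifting g).
  { apply (alg_hom_ext G FA (bialg_alg a)).
    - unfold lifting. rewrite <- (comp_assoc _ _ _ _ _ (hxid P H k)), ext_eta, hxid_pair,
        !pair_comp, Hgen, comp_id_l. reflexivity.
    - apply (alg_hom_comp G) with (b := a); [exact Hk | apply is_bialg_pair_hom, Hp].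
    - apply (alg_hom_comp G) with (b := bialg_alg (phi FA W));
        [apply ext_hom | apply hxid_bialg_alg_hom, Hk]. }
  rewrite lifting_pair, hxid_pair, pair_comp in E.
  apply (f_equal (fun u => pi1 P _ _ \o u)) in E. rewrite !pair_pi1 in E. exact E.
Qed.

Lemma lift_hat {W Y : Cat} (f : Hom W Y) (g : Hom W (fob H (T W))) (d : Hom Y (fob H (T Y))) :
  d \o f = fmap H (hat FA f) \o g -> lift d \o hat FA f = fmap H (hat FA f) \o lift g.
Proof.
  intros E. apply (bialg_coalg_hom (phi FA Y)); [apply lift_bialg | apply hat_phi |].
  rewrite <- comp_assoc, hat_eta, comp_assoc, lift_eta. exact E.
Qed.

Lemma lift_mu {W : Cat} (g : Hom W (fob H (T W))) :
  lift g \o mu W = fmap H (mu W) \o lift (fmap H (eta FA (T W)) \o lift g).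
Proof.
  apply (bialg_coalg_hom (phi FA W)); [apply lift_bialg | apply sharp_phi |].
  rewrite <- comp_assoc, sharp_eta, comp_id_r, comp_assoc, <- fmap_comp, sharp_eta,
    fmap_id, comp_id_l.
  reflexivity.
Qed.

Lemma lift_phi_eta {A : Cat} (p : Hom A (fob H A)) :
  lift (fmap H (eta FA A) \o p) \o phi FA A \o fmap G (eta FA A) =
  r A \o fmap G (pair P p (idm A)).
Proof.
  assert (E : pair P (fmap H (eta FA A) \o p) (eta FA A) =
              hxid P H (eta FA A) \o pair P p (idm A)).
  { rewrite hxid_pair, comp_id_r. reflexivity. }
  rewrite (lift_bialg _), <- !comp_assoc, <- fmap_comp, <- lifting_pair.
  unfold lifting. rewrite ext_eta, E, fmap_comp, (comp_assoc _ _ _ _ _ (r (T A))), Hr,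
    !comp_assoc, <- fmap_comp, mu_hat_eta, fmap_id, comp_id_l.
  reflexivity.
Qed.

End Lifting.

Section Interpretation.
Context {Cat : Category} (P : BinProducts Cat) (Q : BinCoproducts Cat) (H G : Functor Cat)
  (FA : FreeAlgs (fob G) (@fmap Cat G))
  (r : forall X : Cat, Hom (fob G (prodO P (fob H X) X)) (fob H (hob FA X)))
  (Hr : is_GSOS_rule P H G FA r)
  (C : Cat) (c : Hom C (fob H C)) (Hterm : is_terminal_coalg H C c)
  (cinv : Hom (fob H C) C) (Hcinv1 : cinv \o c = idm C) (Hcinv2 : c \o cinv = idm (fob H C)).

Local Notation T := (hob FA).
Local Notation mu X := (sharp FA (phi FA X)).
Local Notation is_bialg := (is_bialg P H G FA r).
Local Notation lift := (lift P H G FA r).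

Lemma coalg_uniq {A : Cat} (al : Hom A (fob H A)) (f1 f2 : Hom A C) :
  c \o f1 = fmap H f1 \o al -> c \o f2 = fmap H f2 \o al -> f1 = f2.
Proof.
  intros E1 E2. destruct (Hterm A al) as [h [_ U]].
  rewrite <- (U f1 E1). apply U. exact E2.
Qed.

Lemma final_inj {A : Cat} (u v : Hom A C) : c \o u = c \o v -> u = v.
Proof.
  intros E. rewrite <- (comp_id_l _ _ _ u), <- (comp_id_l _ _ _ v), <- Hcinv1,
    <- !comp_assoc, E.
  reflexivity.
Qed.

Lemma bialg_unique (a1 a2 : Hom (fob G C) C) : is_bialg a1 c -> is_bialg a2 c -> a1 = a2.
Proof.
  intros H1 H2.
  assert (Hcoalg : forall a, is_bialg a c ->
            c \o sharp FA a = fmap H (sharp FA a) \o lift (fmap H (eta FA C) \o c)).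
  { intros a Ha. apply (bialg_coalg_hom P H G FA r Hr a); [exact Ha | apply sharp_phi |].
    rewrite <- comp_assoc, sharp_eta, comp_id_r, comp_assoc, <- fmap_comp, sharp_eta,
      fmap_id, comp_id_l.
    reflexivity. }
  rewrite <- (sharp_phi_eta G FA a1), <- (sharp_phi_eta G FA a2).
  f_equal. f_equal. apply (coalg_uniq (lift (fmap H (eta FA C) \o c))); auto.
Qed.

Lemma bialg_exists : exists a, is_bialg a c.
Proof.
  set (z := lift (fmap H (eta FA C) \o c)).
  destruct (Hterm (T C) z) as [h [Hh _]].
  assert (Hunit : h \o eta FA C = idm C).
  { apply (coalg_uniq c).
    - rewrite comp_assoc, Hh, <- comp_assoc. unfold z.
      rewrite lift_eta, comp_assoc, <- fmap_comp. reflexivity.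
    - rewrite fmap_id, comp_id_l, comp_id_r. reflexivity. }
  assert (Hmult : h \o mu C = h \o hat FA h).
  { apply (coalg_uniq (lift (fmap H (eta FA (T C)) \o z))).
    - rewrite comp_assoc, Hh, <- comp_assoc. unfold z.
      rewrite (lift_mu P H G FA r Hr), comp_assoc, <- fmap_comp. reflexivity.
    - rewrite comp_assoc, Hh, <- comp_assoc. unfold z.
      rewrite (lift_hat P H G FA r Hr h (fmap H (eta FA (T C)) \o z)), comp_assoc,
        <- fmap_comp; [reflexivity|].
      rewrite <- comp_assoc, Hh, comp_assoc, <- fmap_comp, comp_assoc, <- fmap_comp,
        hat_eta.
      reflexivity. }
  exists (h \o phi FA C \o fmap G (eta FA C)).
  red. rewrite <- (em_alg_sharp G FA h Hunit Hmult).
  transitivity (fmap H h \o (z \o phi FA C \o fmap G (eta FA C))).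
  { rewrite !comp_assoc, <- Hh. reflexivity. }
  unfold z. rewrite (lift_phi_eta P H G FA r Hr), comp_assoc. reflexivity.
Qed.

(* The flat equation [x] as an [H T]-coalgebra on [X + C] whose [C]-summand carries [c]. *)
Definition flat_coalg {X : Cat} (x : Hom X (coprodO Q (fob H (T X)) C)) :
  Hom (coprodO Q X C) (fob H (T (coprodO Q X C))) :=
  copair Q (copair Q (fmap H (hat FA (inl Q X C)))
                     (fmap H (eta FA _ \o inr Q X C) \o c) \o x)
           (fmap H (eta FA _ \o inr Q X C) \o c).

Section Cia.
Context (a : Hom (fob G C) C) (Ha : is_bialg a c).

Lemma coalg_hom_alg_hom {W : Cat} (g : Hom W (fob H (T W))) (h : Hom (T W) C) :
  c \o h = fmap H h \o lift g -> h \o mu W = sharp FA a \o hat FA h ->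
  h \o phi FA W = a \o fmap G h.
Proof.
  intros Hh Hmult. apply final_inj.
  assert (Hpair : hxid P H h \o pair P (lift g) (idm (T W)) = pair P c (idm C) \o h).
  { rewrite hxid_pair, pair_comp, Hh, comp_id_l, comp_id_r. reflexivity. }
  transitivity (fmap H (sharp FA a) \o (fmap H (hat FA h) \o r (T W))
                 \o fmap G (pair P (lift g) (idm (T W)))).
  { rewrite comp_assoc, Hh, <- comp_assoc, (lift_bialg P H G FA r), !comp_assoc,
      <- !fmap_comp, Hmult.
    reflexivity. }
  rewrite <- Hr, <- !comp_assoc, <- fmap_comp, Hpair, fmap_comp, !comp_assoc, Ha.
  reflexivity.
Qed.

Lemma coalg_hom_sharp {W : Cat} (g : Hom W (fob H (T W))) (h : Hom (T W) C) :
  c \o h = fmap H h \o lift g -> h = sharp FA a \o hat FA (h \o eta FA W).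
Proof.
  intros Hh.
  assert (Hmult : h \o mu W = sharp FA a \o hat FA h).
  { apply (coalg_uniq (lift (fmap H (eta FA (T W)) \o lift g))).
    - rewrite comp_assoc, Hh, <- comp_assoc, (lift_mu P H G FA r Hr), comp_assoc,
        <- fmap_comp.
      reflexivity.
    - apply (bialg_coalg_hom P H G FA r Hr a); [exact Ha | apply sharp_hat_alg_hom |].
      rewrite <- (comp_assoc _ _ _ _ _ c), sharp_hat_eta, comp_assoc, <- fmap_comp,
        sharp_hat_eta.
      exact Hh. }
  rewrite <- ext_sharp. apply ext_uniq; [reflexivity|].
  exact (coalg_hom_alg_hom g h Hh Hmult).
Qed.

Definition solves {X : Cat} (x : Hom X (coprodO Q (fob H (T X)) C)) (d : Hom X C) : Prop :=
  d = copair Q (cinv \o fmap H (sharp FA a)) (idm C)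
        \o coprodmap Q (fmap H (hat FA d)) (idm C) \o x.

Lemma solves_iff {X : Cat} (x : Hom X (coprodO Q (fob H (T X)) C)) (d : Hom X C) :
  solves x d <->
  c \o copair Q d (idm C) = fmap H (sharp FA a \o hat FA (copair Q d (idm C))) \o flat_coalg x.
Proof.
  set (g := copair Q d (idm C)).
  set (w := copair Q (fmap H (sharp FA a \o hat FA d)) c \o x).
  assert (Hflat : fmap H (sharp FA a \o hat FA g) \o flat_coalg x = copair Q w c).
  { unfold flat_coalg. rewrite comp_copair, comp_assoc, comp_copair, !comp_assoc,
      <- !fmap_comp, <- !comp_assoc, <- hat_comp, !comp_assoc, sharp_hat_eta.
    unfold g. rewrite copair_inl, copair_inr, fmap_id, !comp_id_l. reflexivity. }
  assert (Hsol : copair Q (cinv \o fmap H (sharp FA a)) (idm C)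
                   \o coprodmap Q (fmap H (hat FA d)) (idm C) \o x = cinv \o w).
  { unfold w. rewrite copair_coprodmap, comp_id_r, comp_assoc, comp_copair, Hcinv1,
      <- comp_assoc, <- fmap_comp.
    reflexivity. }
  unfold solves. rewrite Hsol, Hflat, (iso_eq_comp c cinv Hcinv1 Hcinv2). unfold g.
  rewrite comp_copair, comp_id_r.
  split; [intros ->; reflexivity | intros E; apply copair_inj in E as [E _]; exact E].
Qed.

Lemma bialg_cia : is_cia Q (HFhat0 H FA) (HFhat1 H FA) C (cinv \o fmap H (sharp FA a)).
Proof.
  intros X x. destruct (Hterm _ (lift (flat_coalg x))) as [h [Hh _]].
  pose (g := h \o eta FA (coprodO Q X C)).
  assert (Hg : c \o g = fmap H h \o flat_coalg x).
  { unfold g. rewrite comp_assoc, Hh, <- comp_assoc, lift_eta. reflexivity. }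
  assert (Hsharp : h = sharp FA a \o hat FA g) by exact (coalg_hom_sharp _ h Hh).
  assert (Hinr : g \o inr Q X C = idm C).
  { apply (coalg_uniq c); [| rewrite fmap_id, comp_id_l, comp_id_r; reflexivity].
    rewrite comp_assoc, Hg, <- comp_assoc. unfold flat_coalg.
    rewrite copair_inr, comp_assoc, <- fmap_comp, comp_assoc. reflexivity. }
  assert (Hgsplit : g = copair Q (g \o inl Q X C) (idm C)).
  { rewrite <- Hinr. apply copair_eta. }
  exists (g \o inl Q X C). split.
  - apply (solves_iff x). rewrite <- Hgsplit, Hg, <- Hsharp. reflexivity.
  - intros d Hd. apply (solves_iff x) in Hd.
    assert (E : sharp FA a \o hat FA (copair Q d (idm C)) = h).
    { apply (coalg_uniq (lift (flat_coalg x))); [| exact Hh].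
      apply (bialg_coalg_hom P H G FA r Hr a); [exact Ha | apply sharp_hat_alg_hom |].
      rewrite <- (comp_assoc _ _ _ _ _ c), sharp_hat_eta. exact Hd. }
    rewrite <- (copair_inl _ Q _ _ _ d (idm C)),
      <- (sharp_hat_eta G FA a (copair Q d (idm C))), E.
    reflexivity.
Qed.

End Cia.
End Interpretation.

Section Sum.
Context {Cat : Category} (Q : BinCoproducts Cat) (K V : Functor Cat).

Lemma sumF1_id (A : Cat) : sumF1 Q K V A A (idm A) = idm (sumF0 Q K V A).
Proof.
  unfold sumF1, coprodmap. rewrite !fmap_id, !comp_id_r. symmetry. apply copair_uniq;
    apply comp_id_l.
Qed.

Lemma sumF1_comp (A B D : Cat) (g : Hom B D) (f : Hom A B) :
  sumF1 Q K V A D (g \o f) = sumF1 Q K V B D g \o sumF1 Q K V A B f.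
Proof.
  unfold sumF1, sumF0. symmetry. unfold coprodmap at 1.
  rewrite copair_coprodmap. unfold coprodmap. rewrite !fmap_comp, !comp_assoc. reflexivity.
Qed.

Definition sumF : Functor Cat :=
  Build_Functor Cat (sumF0 Q K V) (sumF1 Q K V) sumF1_id sumF1_comp.

Lemma sumF1_inl {A B : Cat} (f : Hom A B) :
  sumF1 Q K V A B f \o inl Q _ _ = inl Q _ _ \o fmap K f.
Proof. apply copair_inl. Qed.

End Sum.

Section SumRule.
Context {Cat : Category} (P : BinProducts Cat) (Q : BinCoproducts Cat) (H K V : Functor Cat)
  (FK : FreeAlgs (fob K) (@fmap Cat K)) (FF : FreeAlgs (sumF0 Q K V) (sumF1 Q K V)).

Local Notation F := (sumF Q K V).

Lemma alg_hom_inl {A B : Cat} (a : Hom (sumF0 Q K V A) A) (b : Hom (sumF0 Q K V B) B)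
  (k : Hom A B) :
  k \o a = b \o sumF1 Q K V A B k -> k \o (a \o inl Q _ _) = (b \o inl Q _ _) \o fmap K k.
Proof. intros E. rewrite comp_assoc, E, <- !comp_assoc, sumF1_inl. reflexivity. Qed.

Definition hat_inl (X : Cat) : Hom (hob FK X) (hob FF X) :=
  ext FK (phi FF X \o inl Q _ _) (eta FF X).

Lemma hat_inl_alg_hom (X : Cat) :
  hat_inl X \o phi FK X = (phi FF X \o inl Q _ _) \o fmap K (hat_inl X).
Proof. apply ext_hom. Qed.

Lemma hat_inl_natural {X Y : Cat} (f : Hom X Y) :
  hat_inl Y \o hat FK f = hat FF f \o hat_inl X.
Proof.
  apply (alg_hom_ext K FK (phi FF Y \o inl Q _ _)).
  - rewrite <- !comp_assoc, (hat_eta K FK). unfold hat_inl. rewrite comp_assoc, !ext_eta.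
    symmetry. apply (hat_eta F FF).
  - apply (alg_hom_comp K) with (b := phi FK Y); [apply (hat_phi K FK) | apply hat_inl_alg_hom].
  - apply (alg_hom_comp K) with (b := phi FF X \o inl Q _ _); [apply hat_inl_alg_hom |].
    apply alg_hom_inl. exact (hat_phi F FF f).
Qed.

Lemma sharp_hat_inl {A : Cat} (a : Hom (sumF0 Q K V A) A) :
  sharp FF a \o hat_inl A = sharp FK (a \o inl Q _ _).
Proof.
  apply ext_uniq.
  - unfold hat_inl. rewrite <- comp_assoc, ext_eta. apply (sharp_eta F FF).
  - apply (alg_hom_comp K) with (b := phi FF A \o inl Q _ _); [apply hat_inl_alg_hom |].
    apply alg_hom_inl. exact (sharp_phi F FF a).
Qed.

Context (l : forall X : Cat, Hom (fob K (prodO P (fob H X) X)) (fob H (hob FK X)))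
  (Hl : is_GSOS_rule P H K FK l)
  (e : forall X : Cat, Hom (fob V (prodO P (fob H X) X)) (fob H (hob FF X)))
  (He : is_rps P Q H K V FF e).

Definition sum_rule (X : Cat) : Hom (sumF0 Q K V (prodO P (fob H X) X)) (fob H (hob FF X)) :=
  copair Q (fmap H (hat_inl X) \o l X) (e X).

Lemma sum_rule_natural : is_GSOS_rule P H F FF sum_rule.
Proof.
  intros X Y f. cbn [fob fmap sumF]. unfold sum_rule, sumF1, sumF0.
  rewrite copair_coprodmap, comp_copair. f_equal.
  - rewrite <- comp_assoc, Hl, !comp_assoc, <- !fmap_comp, hat_inl_natural. reflexivity.
  - apply He.
Qed.

Lemma sum_rule_bialg {A : Cat} (p : Hom A (fob H A)) (u : Hom (fob K A) A)
  (v : Hom (fob V A) A) :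
  is_bialg P H F FF sum_rule (copair Q u v) p <->
  is_bialg P H K FK l u p /\
  p \o v = fmap H (sharp FF (copair Q u v)) \o e A \o fmap V (pair P p (idm A)).
Proof.
  unfold is_bialg. cbn [fob fmap sumF]. unfold sum_rule, sumF1, sumF0.
  rewrite !comp_copair, copair_coprodmap, !comp_assoc, <- fmap_comp, sharp_hat_inl.
  (* [rewrite copair_inl] fails: this composite is typed through [sumF0]. *)
  match goal with
  | |- context [sharp FK ?w] => replace w with u by (symmetry; apply copair_inl)
  end.
  split.
  - apply copair_inj.
  - intros [Hu Hv]. rewrite Hu, Hv. reflexivity.
Qed.

Lemma sum_rule_solution {A : Cat} (p : Hom A (fob H A)) (pinv : Hom (fob H A) A)
  (Hp1 : pinv \o p = idm A) (Hp2 : p \o pinv = idm (fob H A))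
  (u : Hom (fob K A) A) (v : Hom (fob V A) A) :
  is_bialg P H K FK l u p ->
  (v = pinv \o fmap H (sharp FF (copair Q u v)) \o e A \o fmap V (pair P p (idm A)) <->
   is_bialg P H F FF sum_rule (copair Q u v) p).
Proof.
  intros Hu. rewrite sum_rule_bialg, <- !comp_assoc, (iso_eq_comp p pinv Hp1 Hp2),
    !comp_assoc.
  split; [intros Hv; split; assumption | intros [_ Hv]; exact Hv].
Qed.

End SumRule.

Theorem mainTheorem10
  (Cat : Category) (P : BinProducts Cat) (Q : BinCoproducts Cat)
  (H K V : Functor Cat)
  (FK : FreeAlgs (fob K) (@fmap Cat K))
  (FF : FreeAlgs (sumF0 Q K V) (sumF1 Q K V))
  (C : Cat) (c : Hom C (fob H C)) (Hterm : is_terminal_coalg H C c)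
  (cinv : Hom (fob H C) C) (Hcinv1 : cinv \o c = idm C) (Hcinv2 : c \o cinv = idm (fob H C))
  (l : forall X : Cat, Hom (fob K (prodO P (fob H X) X)) (fob H (hob FK X)))
  (Hl : is_GSOS_rule P H K FK l)
  (b : Hom (fob K C) C)
  (Hb : c \o b = fmap H (sharp FK b) \o l C \o fmap K (pair P c (idm C)))
  (e : forall X : Cat, Hom (fob V (prodO P (fob H X) X)) (fob H (hob FF X)))
  (He : is_rps P Q H K V FF e) :
  exists s : Hom (fob V C) C,
    s = cinv \o fmap H (sharp FF (copair Q b s)) \o e C \o fmap V (pair P c (idm C))
    /\ (forall s' : Hom (fob V C) C,
          s' = cinv \o fmap H (sharp FF (copair Q b s')) \o e C \o fmap V (pair P c (idm C)) ->
          s' = s)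
    /\ is_cia Q (HFhat0 H FF) (HFhat1 H FF) C (cinv \o fmap H (sharp FF (copair Q b s))).
Proof.
  pose proof (sum_rule_natural P Q H K V FK FF l Hl e He) as Hrule.
  destruct (bialg_exists P H (sumF Q K V) FF _ Hrule C c Hterm) as [a Ha].
  set (s := a \o inr Q _ _).
  assert (Ea : a = copair Q b s).
  { rewrite (copair_eta Q a) in Ha |- *.
    apply (sum_rule_bialg P Q H K V FK FF l e) in Ha as [Hinl _].
    rewrite (bialg_unique P H K FK l Hl C c Hterm _ _ Hinl Hb). reflexivity. }
  rewrite Ea in Ha.
  pose proof (sum_rule_solution P Q H K V FK FF l e c cinv Hcinv1 Hcinv2 b) as Hsolve.
  exists s. split; [|split].
  - apply Hsolve; assumption.
  - intros s' Hs'. apply Hsolve in Hs'; [|exact Hb].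
    exact (proj2 (copair_inj Q b b s' s
             (bialg_unique P H (sumF Q K V) FF _ Hrule C c Hterm _ _ Hs' Ha))).
  - exact (bialg_cia P Q H (sumF Q K V) FF _ Hrule C c Hterm cinv Hcinv1 Hcinv2 _ Ha).
Qed.
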